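(* Let $\mathcal A$ be an ordered normed algebra with unit $e$ whose algebra cone $\mathcal A^+$ is normal. Then there do not exist $a,b\in\mathcal A$, with at least one of $a,b$ positive, such that $ab-ba\geq e$.
   Context: A normed algebra $\mathcal A$ (real or complex, with submultiplicative norm) with unit $e$. A cone is a nonempty subset $\mathcal A^+\subseteq\mathcal A$ with $\mathcal A^++\mathcal A^+\subseteq\mathcal A^+$, $\lambda\mathcal A^+\subseteq\mathcal A^+$ for all $\lambda\geq 0$, and $\mathcal A^+\cap(-\mathcal A^+)=\{0\}$; it induces the partial order $a\leq b \iff b-a\in\mathcal A^+$. Elements of $\mathcal A^+$ are called positive. The cone is an algebra cone if $\mathcal A^+\cdot\mathcal A^+\subseteq\mathcal A^+$ and $e\in\mathcal A^+$; then $\mathcal A$ is called an ordered normed algebra. The cone is normal if there is a constant $\alpha>0$ such that $0\leq x\leq y$ implies $\|x\|\leq\alpha\|y\|$. *)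

From HB Require Import structures.
From mathcomp Require Import all_boot all_order all_algebra.
From mathcomp Require Import reals.
Set Implicit Arguments. Unset Strict Implicit. Unset Printing Implicit Defensive.
Import Order.TTheory GRing.Theory Num.Theory.
Local Open Scope ring_scope.

Record is_algebra_norm (R : realType) (A : algType R) (nrm : A -> R) : Prop := {
  nrm_ge0 : forall x, 0 <= nrm x;
  nrm_eq0 : forall x, nrm x = 0 -> x = 0;
  nrm_triangle : forall x y, nrm (x + y) <= nrm x + nrm y;
  nrm_scale : forall (l : R) x, nrm (l *: x) = `|l| * nrm x;
  nrm_submul : forall x y, nrm (x * y) <= nrm x * nrm y }.

Definition is_cone (R : realType) (A : algType R) (P : A -> Prop) : Prop :=
  (exists x, P x) /\
  (forall x y, P x -> P y -> P (x + y)) /\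
  (forall (l : R) x, 0 <= l -> P x -> P (l *: x)) /\
  (forall x, P x -> P (- x) -> x = 0).

Definition cone_le (R : realType) (A : algType R) (P : A -> Prop) (a b : A) : Prop :=
  P (b - a).

Definition is_algebra_cone (R : realType) (A : algType R) (P : A -> Prop) : Prop :=
  is_cone P /\ (forall x y, P x -> P y -> P (x * y)) /\ P 1.

Definition is_normal_cone (R : realType) (A : algType R) (nrm : A -> R)
    (P : A -> Prop) : Prop :=
  exists alpha : R, 0 < alpha /\
    forall x y, cone_le P 0 x -> cone_le P x y -> nrm x <= alpha * nrm y.

From HB Require Import structures.
From mathcomp Require Import all_boot all_order all_algebra.
From mathcomp Require Import reals.
Set Implicit Arguments. Unset Strict Implicit. Unset Printing Implicit Defensive.
Import Order.TTheory GRing.Theory Num.Theory.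
Local Open Scope ring_scope.

(* If x >= 0 and xb - bx >= e, then inductively
   x^(n+1) b - b x^(n+1) >= (n+1) x^n >= 0.  Normality and submultiplicativity
   give (n+1) |x^n| <= 2 alpha |x| |b| |x^n|, so x^k = 0 for k large.  But
   x^(k+1) = 0 forces 0 >= (k+1) x^k >= 0, i.e. x^k = 0, and descending
   to k = 0 yields e = 0.  The case b >= 0 reduces to this one through the
   pair (b, -a). *)

Lemma commutator_exprS (T : pzRingType) (x b : T) n :
  x ^+ n.+2 * b - b * x ^+ n.+2 - x ^+ n.+1 *+ n.+2 =
  x * (x ^+ n.+1 * b - b * x ^+ n.+1 - x ^+ n *+ n.+1)
    + (x * b - b * x - 1) * x ^+ n.+1.
Proof.
rewrite !mulrBr !mulrBl mul1r mulrnAr -exprS mulrA -exprS.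
rewrite [x * (b * _)]mulrA -[b * x * _]mulrA -exprS mulrSr opprD.
rewrite !addrA [_ - x * b * _ - _]addrAC subrK; congr (_ - _).
exact: addrAC.
Qed.

Lemma linear_growth_eq0 (R : archiRealFieldType) (r : nat -> R) (K : R) :
  (forall n, 0 <= r n) -> (forall n, n.+1%:R * r n <= K * r n) ->
  exists n, r n = 0.
Proof.
move=> r_ge0 growth; set k := Num.bound `|K|; exists k.
apply/eqP; rewrite eq_le r_ge0 andbT leNgt; apply/negP => rk_gt0.
have := growth k; rewrite ler_pM2r // => kS_le_K.
have K_lt : K < k.+1%:R.
  apply: le_lt_trans (ler_norm K) (lt_trans (archi_boundP (normr_ge0 K)) _).
  by rewrite ltr_nat.
by have := lt_le_trans K_lt kS_le_K; rewrite ltxx.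
Qed.

Section AlgebraCone.

Variables (R : realType) (A : algType R) (P : A -> Prop).
Hypothesis cone_P : is_algebra_cone P.

Lemma coneD x y : P x -> P y -> P (x + y).
Proof. by case: cone_P => [[_ [addP _]] _]; apply: addP. Qed.

Lemma coneZ (l : R) x : 0 <= l -> P x -> P (l *: x).
Proof. by case: cone_P => [[_ [_ [scaleP _]]] _]; apply: scaleP. Qed.

Lemma coneMn x n : P x -> P (x *+ n).
Proof. by rewrite -scaler_nat; apply: coneZ; rewrite ler0n. Qed.

Lemma cone_eq0 x : P x -> P (- x) -> x = 0.
Proof. by case: cone_P => [[_ [_ [_ antisym]]] _]; apply: antisym. Qed.

Lemma coneM x y : P x -> P y -> P (x * y).
Proof. by case: cone_P => [_ [mulP _]]; apply: mulP. Qed.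

Lemma coneX x n : P x -> P (x ^+ n).
Proof.
move=> Px; elim: n => [|n IHn]; last by rewrite exprS; apply: coneM.
by case: cone_P => [_ [_ P1]]; rewrite expr0.
Qed.

Variables x b : A.
Hypotheses (Px : P x) (commutator_ge1 : cone_le P 1 (x * b - b * x)).

Lemma cone_le_commutator_expr n :
  cone_le P (x ^+ n *+ n.+1) (x ^+ n.+1 * b - b * x ^+ n.+1).
Proof.
rewrite /cone_le; elim: n => [|n IHn]; first by rewrite expr0 expr1 mulr1n.
by rewrite commutator_exprS; apply: coneD; apply: coneM => //; apply: coneX.
Qed.

Lemma commutator_expr_eq0 k : x ^+ k.+1 = 0 -> x ^+ k = 0.
Proof.
move=> xk1_0; have := cone_le_commutator_expr k.
rewrite /cone_le xk1_0 mul0r mulr0 subrr sub0r.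
move=> /(cone_eq0 (coneMn k.+1 (coneX k Px))) /eqP.
by rewrite -scaler_nat scaler_eq0 pnatr_eq0 => /eqP.
Qed.

Lemma commutator_expr_neq0 k : x ^+ k != 0.
Proof.
elim: k => [|k IHk]; first by rewrite expr0 oner_neq0.
by apply: contra IHk => /eqP /commutator_expr_eq0 ->.
Qed.

End AlgebraCone.

Section NormalCone.

Variables (R : realType) (A : algType R) (nrm : A -> R) (P : A -> Prop).
Hypotheses (nrm_A : is_algebra_norm nrm) (cone_P : is_algebra_cone P).
Hypothesis normal_P : is_normal_cone nrm P.

Lemma nrmN z : nrm (- z) = nrm z.
Proof. by rewrite -scaleN1r (nrm_scale nrm_A) normrN normr1 mul1r. Qed.

Lemma nrmMn z n : nrm (z *+ n) = n%:R * nrm z.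
Proof. by rewrite -scaler_nat (nrm_scale nrm_A) normr_nat. Qed.

Lemma nrm_commutator_le y z : nrm (y * z - z * y) <= (nrm y * nrm z) *+ 2.
Proof.
apply: le_trans (nrm_triangle nrm_A _ _) _; rewrite nrmN mulr2n lerD //.
  exact: nrm_submul.
by rewrite mulrC; apply: nrm_submul.
Qed.

Lemma nrm_exprS y n : nrm (y ^+ n.+1) <= nrm y * nrm (y ^+ n).
Proof. by rewrite exprS; apply: nrm_submul. Qed.

Lemma commutator_ge1_nilpotent x b :
  P x -> cone_le P 1 (x * b - b * x) -> exists k, x ^+ k = 0.
Proof.
move=> Px commutator_ge1; case: normal_P => alpha [alpha_gt0 normal].
have growth n :
    n.+1%:R * nrm (x ^+ n) <= (alpha * (nrm x * nrm b) *+ 2) * nrm (x ^+ n).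
  have xn_ge0 : cone_le P 0 (x ^+ n *+ n.+1).
    by rewrite /cone_le subr0; exact: (coneMn cone_P _ (coneX cone_P _ Px)).
  have := cone_le_commutator_expr cone_P Px commutator_ge1 n.
  move=> /(normal _ _ xn_ge0); rewrite nrmMn => /le_trans; apply.
  rewrite -mulrnAr -mulrA; apply: ler_wpM2l; first exact: ltW.
  apply: le_trans (nrm_commutator_le _ _) _; rewrite mulrnAl ler_wMn2r //.
  by rewrite mulrAC ler_wpM2r ?(nrm_ge0 nrm_A) ?nrm_exprS.
have [k /(nrm_eq0 nrm_A)] :=
  linear_growth_eq0 (fun n => nrm_ge0 nrm_A (x ^+ n)) growth.
by exists k.
Qed.

Lemma commutator_not_ge1 x b : P x -> ~ cone_le P 1 (x * b - b * x).
Proof.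
move=> Px xb_ge1; have [k xk_0] := commutator_ge1_nilpotent Px xb_ge1.
by have := commutator_expr_neq0 cone_P Px xb_ge1 k; rewrite xk_0 eqxx.
Qed.

End NormalCone.

Theorem corollary2p2 (R : realType) (A : algType R) (nrm : A -> R)
    (P : A -> Prop) :
  is_algebra_norm nrm -> is_algebra_cone P -> is_normal_cone nrm P ->
  ~ (exists a b : A, (P a \/ P b) /\ cone_le P 1 (a * b - b * a)).
Proof.
move=> nrm_A cone_P normal_P [a [b [[Pa | Pb] ab_ge1]]].
  exact: (commutator_not_ge1 nrm_A cone_P normal_P Pa ab_ge1).
apply: (commutator_not_ge1 nrm_A cone_P normal_P (b := - a) Pb).
by rewrite mulrN mulNr opprK addrC.
Qed.
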